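(* Let $p$ be a prime, $r=p^{h'}$ with $h'\ge1$, $l\ge1$ coprime to $r$, $d\in\{1,p,p^2\}$, $M,N^*\ge1$, and complex numbers $(\alpha_m)_{m\le M}$, $(\beta_n)_{n\le N^*}$ with $\alpha_m\ll_\varepsilon m^\varepsilon$, $\beta_n\ll_\varepsilon n^\varepsilon$ for every $\varepsilon>0$. Put $$B=\sum_{1\le m\le M}\sum_{1\le n\le N^*}\alpha_m\beta_n\frac{S(ldm,n;r)}{\sqrt r},\qquad S(a,b;r)=\sum_{x\ (\mathrm{mod}\ r),\ (x,r)=1}e\Big(\frac{ax+b\overline{x}}{r}\Big).$$ Then for every $\varepsilon>0$, $$B\ll_{\varepsilon,p}(MN^*r)^\varepsilon MN^*\min_{s\mid r}\Big(\Big(\frac{r}{N^*}\Big)^{1/2}+\Big(\frac sr\Big)^{1/4}+\Big(\frac{r}{M^2s}\Big)^{1/4}\Big).$$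
   Context: $e(z)=e^{2\pi iz}$; $\overline{x}$ denotes the inverse of $x$ modulo $r$. *)

From Stdlib Require Import Reals Lra Lia ZArith Znumtheory List.
From Coquelicot Require Import Coquelicot.
Import ListNotations.
Open Scope R_scope.

Definition e (z : R) : C := (cos (2 * PI * z), sin (2 * PI * z)).

Definition csum (l : list nat) (f : nat -> C) : C :=
  fold_right (fun x acc => Cplus (f x) acc) (RtoC 0) l.

(* inverse of x modulo r: the y in [0, r) with x*y = 1 mod r (0 if none) *)
Definition modinv (x r : nat) : nat :=
  hd 0%nat (filter (fun y => Nat.eqb ((x * y) mod r) (1 mod r)) (seq 0 r)).

Definition kloosterman (a b r : nat) : C :=
  csum (filter (fun x => Nat.eqb (Nat.gcd x r) 1) (seq 0 r))
       (fun x => e (INR (a * x + b * modinv x r) / INR r)).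

Definition divisors (r : nat) : list nat :=
  filter (fun s => Nat.eqb (r mod s) 0) (seq 1 r).

(* min over the divisors s of r of f s (r >= 1, so 1 is a divisor) *)
Definition min_div (r : nat) (f : nat -> R) : R :=
  fold_right Rmin (f 1%nat) (map f (divisors r)).

Definition bilinB (l d M N r : nat) (alpha beta : nat -> C) : C :=
  csum (seq 1 M) (fun m =>
    csum (seq 1 N) (fun n =>
      Cmult (Cmult (alpha m) (beta n))
            (Cdiv (kloosterman (l * d * m) n r) (RtoC (sqrt (INR r)))))).

From Stdlib Require Import Reals ZArith Znumtheory List Lra Lia.
From Coquelicot Require Import Coquelicot.
Open Scope R_scope.

(** The bound comes from an L^2 argument, not from estimates for individual
    Kloosterman sums.  Opening [S(ldm, n; r)] writes [sqrt r * B] as a sum over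
    the units [x] mod [r] of [A(x) C(xbar)], with exponential sums
    [A(x) = sum_m alpha_m e(ldmx/r)] and [C(y) = sum_n beta_n e(ny/r)].
    Cauchy-Schwarz separates the two factors, and since [x -> xbar] is injective
    on the units both are bounded by complete sums over [y mod r].  Orthogonality
    of additive characters gives the large sieve bound
    [sum_(y mod r) |sum_(n <= N) c_n e(a n y/r)|^2 <= (N gcd(a, r) + r) sum |c_n|^2],
    and [gcd(ld, r) <= d <= p^2].  Hence
    [|B|^2 << p^2 (M + r)(N + r) M N / r] up to the size of the coefficients,
    and [(M + r)(N + r) <= 4 r M N F^2] for each value [F] of the bracketed
    expression: [(r/N)^(1/2)] accounts for [r^2 M + r M], while [(s/r)^(1/4) + (r/(M^2 s))^(1/4)]
    has square at least [max(1/r, 1/M)], which accounts for [M N + r N]. *)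

Definition rsum (l : list nat) (f : nat -> R) : R :=
  fold_right (fun x acc => f x + acc) 0 l.

Lemma rsum_ext l f g : (forall x, In x l -> f x = g x) -> rsum l f = rsum l g.
Proof.
  induction l as [|a l IH]; intros H; simpl; auto.
  rewrite H by (left; auto). f_equal. apply IH. intros; apply H; right; auto.
Qed.

Lemma rsum_le l f g : (forall x, In x l -> f x <= g x) -> rsum l f <= rsum l g.
Proof.
  induction l as [|a l IH]; intros H; simpl; [lra|].
  assert (f a <= g a) by (apply H; left; auto).
  assert (rsum l f <= rsum l g) by (apply IH; intros; apply H; right; auto).
  lra.
Qed.

Lemma rsum_const l c : rsum l (fun _ => c) = INR (length l) * c.
Proof. induction l; simpl rsum; simpl length; [simpl|rewrite S_INR]; lra. Qed.

Lemma rsum_nonneg l f : (forall x, In x l -> 0 <= f x) -> 0 <= rsum l f.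
Proof.
  intros H. rewrite <- (Rmult_0_r (INR (length l))), <- rsum_const.
  apply rsum_le; auto.
Qed.

Lemma rsum_plus l f g : rsum l (fun x => f x + g x) = rsum l f + rsum l g.
Proof. induction l; simpl; lra. Qed.

Lemma rsum_scal l c f : rsum l (fun x => c * f x) = c * rsum l f.
Proof. induction l; simpl; lra. Qed.

Lemma rsum_scal_r l c f : rsum l (fun x => f x * c) = rsum l f * c.
Proof. induction l; simpl; lra. Qed.


Lemma rsum_swap l1 l2 (f : nat -> nat -> R) :
  rsum l1 (fun i => rsum l2 (fun j => f i j)) =
  rsum l2 (fun j => rsum l1 (fun i => f i j)).
Proof.
  induction l1 as [|a l1 IH]; simpl.
  - induction l2; simpl; lra.
  - rewrite IH, <- rsum_plus. reflexivity.
Qed.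

Lemma rsum_map l f g : rsum (map f l) g = rsum l (fun x => g (f x)).
Proof. induction l; simpl; congruence. Qed.

Lemma rsum_indicator l (P : nat -> bool) :
  rsum l (fun x => if P x then 1 else 0) = INR (length (filter P l)).
Proof.
  induction l as [|a l IH]; simpl; auto.
  rewrite IH. destruct (P a); cbn [length]; try rewrite S_INR; lra.
Qed.

Lemma rsum_filter_le l (P : nat -> bool) f : (forall x, In x l -> 0 <= f x) ->
  rsum (filter P l) f <= rsum l f.
Proof.
  induction l as [|a l IH]; intros H; simpl; [lra|].
  assert (0 <= f a) by (apply H; left; auto).
  assert (rsum (filter P l) f <= rsum l f) by (apply IH; intros; apply H; right; auto).
  destruct (P a); simpl; lra.
Qed.

Lemma rsum_app l1 l2 f : rsum (l1 ++ l2) f = rsum l1 f + rsum l2 f.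
Proof. induction l1; simpl; lra. Qed.

Lemma rsum_incl_le (l2 l1 : list nat) g : (forall x, 0 <= g x) ->
  NoDup l1 -> incl l1 l2 -> rsum l1 g <= rsum l2 g.
Proof.
  intros Hg. revert l1. induction l2 as [|a l2 IH]; intros l1 Hnd Hinc.
  - destruct l1 as [|x l1]; [simpl; lra|]. destruct (Hinc x (or_introl eq_refl)).
  - destruct (in_dec Nat.eq_dec a l1) as [Ha|Ha].
    + destruct (in_split _ _ Ha) as [u [v ->]].
      assert (Hrot : rsum (u ++ a :: v) g = g a + rsum (u ++ v) g).
      { rewrite !rsum_app. simpl. lra. }
      rewrite Hrot. simpl. apply Rplus_le_compat_l, IH.
      * now apply NoDup_remove_1 in Hnd.
      * intros x Hx.
        assert (Hx' : In x (u ++ a :: v)).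
        { apply in_app_or in Hx. apply in_or_app. simpl. tauto. }
        destruct (Hinc x Hx') as [<-|]; auto.
        exfalso. exact (NoDup_remove_2 _ _ _ Hnd Hx).
    + simpl. pose proof (Hg a).
      assert (rsum l1 g <= rsum l2 g).
      { apply IH; auto. intros x Hx. destruct (Hinc x Hx) as [->|]; tauto. }
      lra.
Qed.

Lemma csum_ext l f g : (forall x, In x l -> f x = g x) -> csum l f = csum l g.
Proof.
  induction l as [|a l IH]; intros H; simpl; auto.
  rewrite H by (left; auto). f_equal. apply IH. intros; apply H; right; auto.
Qed.

Lemma csum_app l1 l2 f : csum (l1 ++ l2) f = (csum l1 f + csum l2 f)%C.
Proof. induction l1 as [|a l IH]; simpl; [|rewrite IH]; ring. Qed.

Lemma csum_plus l f g : csum l (fun x => f x + g x)%C = (csum l f + csum l g)%C.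
Proof. induction l as [|a l IH]; simpl; [|rewrite IH]; ring. Qed.

Lemma csum_mult_l l c f : csum l (fun x => c * f x)%C = (c * csum l f)%C.
Proof. induction l as [|a l IH]; simpl; [|rewrite IH]; ring. Qed.

Lemma csum_mult_r l c f : csum l (fun x => f x * c)%C = (csum l f * c)%C.
Proof. induction l as [|a l IH]; simpl; [|rewrite IH]; ring. Qed.

Lemma csum_const l : csum l (fun _ => RtoC 1) = RtoC (INR (length l)).
Proof.
  induction l as [|a l IH]; simpl; auto. rewrite IH.
  destruct (length l); simpl; apply injective_projections; simpl; ring.
Qed.

Lemma csum_swap l1 l2 (f : nat -> nat -> C) :
  csum l1 (fun i => csum l2 (fun j => f i j)) =
  csum l2 (fun j => csum l1 (fun i => f i j)).
Proof.
  induction l1 as [|a l1 IH]; simpl.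
  - induction l2 as [|b l2 IH2]; simpl; [|rewrite <- IH2]; ring.
  - rewrite IH, <- csum_plus. reflexivity.
Qed.

Lemma csum_conj l f : Cconj (csum l f) = csum l (fun x => Cconj (f x)).
Proof.
  induction l as [|a l IH]; simpl.
  - apply injective_projections; simpl; lra.
  - rewrite Cplus_conj, IH. reflexivity.
Qed.

Lemma csum_RtoC l f : csum l (fun x => RtoC (f x)) = RtoC (rsum l f).
Proof.
  induction l as [|a l IH]; simpl; auto.
  rewrite IH. apply injective_projections; simpl; lra.
Qed.

Lemma Cmod_csum_le l f : Cmod (csum l f) <= rsum l (fun x => Cmod (f x)).
Proof.
  induction l as [|a l IH]; simpl.
  - rewrite Cmod_0. lra.
  - eapply Rle_trans; [apply Cmod_triangle|lra].
Qed.

Lemma e_add x y : e (x + y) = (e x * e y)%C.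
Proof.
  unfold e, Cmult; simpl.
  replace (2 * PI * (x + y)) with (2 * PI * x + 2 * PI * y) by ring.
  rewrite cos_plus, sin_plus. apply injective_projections; simpl; ring.
Qed.

Lemma e_conj x : Cconj (e x) = e (- x).
Proof.
  unfold e, Cconj; simpl. replace (2 * PI * - x) with (- (2 * PI * x)) by ring.
  rewrite cos_neg, sin_neg. reflexivity.
Qed.

Lemma e_IZR k : e (IZR k) = RtoC 1.
Proof.
  unfold e. assert (Hs : sin (IZR k * PI) = 0) by (apply sin_eq_0_1; eauto).
  replace (2 * PI * IZR k) with (2 * (IZR k * PI)) by ring.
  rewrite cos_2a_sin, sin_2a, Hs. apply injective_projections; simpl; ring.
Qed.

Lemma e_pow x n : (e x ^ n)%C = e (INR n * x).
Proof.
  induction n as [|n IH]; cbn [Cpow].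
  - replace (INR 0 * x) with (IZR 0) by (simpl; ring). now rewrite e_IZR.
  - rewrite IH, <- e_add. f_equal. rewrite S_INR. ring.
Qed.

(* [e(t) = 1] forces [2 t] to be an integer by the sine, and then an even one by the cosine. *)
Lemma e_neq1 (r : nat) (K : Z) : (0 < r)%nat -> (K mod Z.of_nat r <> 0)%Z ->
  e (IZR K / INR r) <> RtoC 1.
Proof.
  intros Hr HK He. unfold e in He.
  assert (Hrp : 0 < INR r) by (apply lt_0_INR; auto).
  assert (Hs : sin (2 * PI * (IZR K / INR r)) = 0) by (apply (f_equal snd) in He; exact He).
  assert (Hc : cos (2 * PI * (IZR K / INR r)) = 1) by (apply (f_equal fst) in He; exact He).
  apply sin_eq_0_0 in Hs. destruct Hs as [j Hj].
  assert (Hj2 : 2 * IZR K = IZR j * INR r).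
  { apply Rmult_eq_reg_l with PI; [|apply PI_neq0].
    replace (PI * (2 * IZR K)) with (2 * PI * (IZR K / INR r) * INR r) by (field; lra).
    rewrite Hj. ring. }
  rewrite INR_IZR_INZ, <- !mult_IZR in Hj2. apply eq_IZR in Hj2.
  rewrite Hj in Hc.
  destruct (Z.Even_or_Odd j) as [[i Hi]|[i Hi]]; subst j.
  - apply HK, Z.mod_divide; [lia|]. exists i. lia.
  - rewrite plus_IZR, mult_IZR in Hc.
    replace ((2 * IZR i + 1) * PI) with (2 * PI * IZR i + PI) in Hc by ring.
    rewrite neg_cos in Hc.
    pose proof (f_equal fst (e_IZR i)) as E. simpl in E. lra.
Qed.

Lemma csum_geometric (z : C) n :
  (csum (seq 0 n) (fun y => z ^ y) * (z - 1))%C = (z ^ n - 1)%C.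
Proof.
  induction n as [|n IH]; [simpl; ring|].
  rewrite seq_S, csum_app. simpl csum. rewrite Cmult_plus_distr_r, IH. simpl. ring.
Qed.

Lemma csum_e_mod (r : nat) (K : Z) : (0 < r)%nat ->
  csum (seq 0 r) (fun y => e (IZR K * INR y / INR r)) =
  if Z.eqb (K mod Z.of_nat r) 0 then RtoC (INR r) else RtoC 0.
Proof.
  intros Hr. assert (Hrp : 0 < INR r) by (apply lt_0_INR; auto).
  destruct (Z.eqb_spec (K mod Z.of_nat r) 0) as [H|H].
  - apply Z.mod_divide in H; [|lia]. destruct H as [c ->].
    rewrite (csum_ext _ _ (fun _ => RtoC 1)).
    { now rewrite csum_const, length_seq. }
    intros y _.
    replace (IZR (c * Z.of_nat r) * INR y / INR r) with (IZR (c * Z.of_nat y)).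
    + apply e_IZR.
    + rewrite !mult_IZR, <- !INR_IZR_INZ. field. lra.
  - set (z := e (IZR K / INR r)).
    rewrite (csum_ext _ _ (fun y => z ^ y)%C).
    2:{ intros y _. unfold z. rewrite e_pow. f_equal. field. lra. }
    pose proof (csum_geometric z r) as G.
    assert (Zr : (z ^ r)%C = RtoC 1).
    { unfold z. rewrite e_pow.
      replace (INR r * (IZR K / INR r)) with (IZR K) by (field; lra). apply e_IZR. }
    assert (Hz : (z - 1)%C <> RtoC 0).
    { intro Hz. apply (e_neq1 r K Hr H). fold z.
      replace z with ((z - 1) + 1)%C by ring. rewrite Hz. ring. }
    rewrite Zr in G. replace (RtoC 1 - RtoC 1)%C with (RtoC 0) in G by ring.
    apply (f_equal (fun w => w * / (z - 1))%C) in G.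
    rewrite <- Cmult_assoc, Cinv_r, Cmult_1_r in G by exact Hz.
    rewrite G. ring.
Qed.

Definition expsum (a r N : nat) (c : nat -> C) (y : nat) : C :=
  csum (seq 1 N) (fun n => (c n * e (INR (a * n * y) / INR r))%C).

Definition congrb (r x y : nat) : bool :=
  Z.eqb ((Z.of_nat x - Z.of_nat y) mod Z.of_nat r) 0.

Lemma Cmod_RtoC_nonneg x : 0 <= x -> Cmod (RtoC x) = x.
Proof. intros. rewrite Cmod_R. apply Rabs_pos_eq; auto. Qed.

Lemma rsum_Cmod_expsum_sq_le (a r N : nat) (c : nat -> C) : (0 < r)%nat ->
  rsum (seq 0 r) (fun y => Cmod (expsum a r N c y) ^ 2) <=
  INR r * rsum (seq 1 N) (fun n => rsum (seq 1 N) (fun n' =>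
    if congrb r (a * n) (a * n') then Cmod (c n) * Cmod (c n') else 0)).
Proof.
  intros Hr. assert (Hrp : 0 < INR r) by (apply lt_0_INR; auto).
  set (L := rsum (seq 0 r) (fun y => Cmod (expsum a r N c y) ^ 2)).
  assert (HL0 : 0 <= L) by (apply rsum_nonneg; intros; apply pow2_ge_0).
  assert (Hexpand : RtoC L = csum (seq 1 N) (fun n => csum (seq 1 N) (fun n' =>
     (c n * Cconj (c n') *
      (if congrb r (a * n) (a * n') then RtoC (INR r) else RtoC 0))%C))).
  { unfold L. rewrite <- csum_RtoC.
    rewrite (csum_ext _ _ (fun y => csum (seq 1 N) (fun n => csum (seq 1 N) (fun n' =>
        (c n * Cconj (c n') *
         e (IZR (Z.of_nat (a * n) - Z.of_nat (a * n')) * INR y / INR r))%C)))).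
    - rewrite csum_swap. apply csum_ext. intros n _.
      rewrite csum_swap. apply csum_ext. intros n' _.
      rewrite csum_mult_l, csum_e_mod by auto. reflexivity.
    - intros y _. rewrite Cmod2_conj. unfold expsum at 2. rewrite csum_conj.
      rewrite <- csum_mult_l, csum_swap. apply csum_ext. intros n' _.
      unfold expsum. rewrite <- csum_mult_r. apply csum_ext. intros n _.
      rewrite Cmult_conj, e_conj.
      replace (IZR (Z.of_nat (a * n) - Z.of_nat (a * n')) * INR y / INR r) with
        (INR (a * n * y) / INR r + - (INR (a * n' * y) / INR r)).
      + rewrite e_add. ring.
      + rewrite minus_IZR, <- !INR_IZR_INZ, !mult_INR. field. lra. }
  rewrite <- (Cmod_RtoC_nonneg L HL0), Hexpand.
  eapply Rle_trans; [apply Cmod_csum_le|].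
  rewrite <- rsum_scal. apply rsum_le. intros n _.
  eapply Rle_trans; [apply Cmod_csum_le|].
  rewrite <- rsum_scal. apply rsum_le. intros n' _.
  rewrite !Cmod_mult, Cmod_conj.
  destruct (congrb r (a * n) (a * n')).
  - rewrite Cmod_RtoC_nonneg; lra.
  - rewrite Cmod_0. lra.
Qed.

(* Schur's test: [u n u n' <= (u n^2 + u n'^2)/2], then count each row and column. *)
Lemma rsum_pairs_le l (P : nat -> nat -> bool) (u : nat -> R) K :
  (forall n, 0 <= u n) ->
  (forall n, In n l -> INR (length (filter (P n) l)) <= K) ->
  (forall n', In n' l -> INR (length (filter (fun n => P n n') l)) <= K) ->
  rsum l (fun n => rsum l (fun n' => if P n n' then u n * u n' else 0))
  <= K * rsum l (fun n => u n ^ 2).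
Proof.
  intros Hu Hrow Hcol.
  set (ind := fun (Q : nat -> nat -> bool) n n' => if Q n n' then 1 else 0).
  assert (Hhalf : forall Q : nat -> nat -> bool,
    (forall n, In n l -> INR (length (filter (Q n) l)) <= K) ->
    rsum l (fun n => rsum l (fun n' => ind Q n n' * (u n ^ 2 / 2)))
    <= K / 2 * rsum l (fun n => u n ^ 2)).
  { intros Q HQ. rewrite <- rsum_scal. apply rsum_le. intros n Hn.
    unfold ind. rewrite rsum_scal_r, rsum_indicator. specialize (HQ n Hn).
    pose proof (pow2_ge_0 (u n)).
    assert (0 <= (K - INR (length (filter (Q n) l))) * u n ^ 2)
      by (apply Rmult_le_pos; lra).
    lra. }
  apply Rle_trans with (rsum l (fun n => rsum l (fun n' =>
     ind P n n' * (u n ^ 2 / 2) + ind P n n' * (u n' ^ 2 / 2)))).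
  { apply rsum_le; intros n _. apply rsum_le; intros n' _. unfold ind.
    pose proof (Hu n); pose proof (Hu n'). pose proof (pow2_ge_0 (u n - u n')).
    destruct (P n n'); nra. }
  rewrite (rsum_ext l _ (fun n => rsum l (fun n' => ind P n n' * (u n ^ 2 / 2))
           + rsum l (fun n' => ind P n n' * (u n' ^ 2 / 2))))
    by (intros; apply rsum_plus).
  rewrite rsum_plus, (rsum_swap l l (fun n n' => ind P n n' * (u n' ^ 2 / 2))).
  pose proof (Hhalf P Hrow).
  pose proof (Hhalf (fun n' n => P n n') Hcol).
  unfold ind in *. lra.
Qed.

(* Distinct elements of a residue class mod [q] have distinct quotients by [q]. *)
Lemma count_congruent_le (q N n0 : nat) : (0 < q)%nat ->
  INR (length (filter (fun n => Nat.eqb (n mod q) (n0 mod q)) (seq 1 N)))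
  <= INR N / INR q + 1.
Proof.
  intros Hq. set (F := filter _ _).
  assert (Hnd : NoDup (map (fun x => (x / q)%nat) F)).
  { apply NoDup_map_NoDup_ForallPairs.
    - intros x y Hx Hy Hxy. unfold F in Hx, Hy. apply filter_In in Hx, Hy.
      destruct Hx as [_ Hx]; destruct Hy as [_ Hy]. apply Nat.eqb_eq in Hx, Hy.
      rewrite (Nat.div_mod_eq x q), (Nat.div_mod_eq y q). lia.
    - apply NoDup_filter, seq_NoDup. }
  assert (Hincl : incl (map (fun x => (x / q)%nat) F) (seq 0 (N / q + 1))).
  { intros z Hz. apply in_map_iff in Hz. destruct Hz as [x [<- Hx]].
    unfold F in Hx. apply filter_In in Hx. destruct Hx as [Hx _]. apply in_seq in Hx.
    apply in_seq. split; [lia|].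
    assert (x / q <= N / q)%nat by (apply Nat.Div0.div_le_mono; lia). lia. }
  pose proof (NoDup_incl_length Hnd Hincl) as HL. rewrite length_map, length_seq in HL.
  apply le_INR in HL. rewrite plus_INR in HL. simpl in HL.
  assert (INR (N / q) <= INR N / INR q).
  { assert (0 < INR q) by (apply lt_0_INR; lia).
    apply Rmult_le_reg_r with (INR q); auto. unfold Rdiv.
    rewrite Rmult_assoc, Rinv_l, Rmult_1_r, <- mult_INR by lra. apply le_INR.
    rewrite Nat.mul_comm. apply Nat.Div0.mul_div_le. }
  lra.
Qed.

Lemma congrb_mul_cancel (a r n n' : nat) : (0 < r)%nat ->
  congrb r (a * n) (a * n') = true ->
  (n mod (r / Nat.gcd r a) = n' mod (r / Nat.gcd r a))%nat.
Proof.
  intros Hr Hc. set (g := Nat.gcd r a). set (q := (r / g)%nat).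
  assert (Hg0 : g <> 0%nat) by (unfold g; intro H; apply Nat.gcd_eq_0 in H; lia).
  destruct (Nat.gcd_divide_l r a) as [q' Hq']. destruct (Nat.gcd_divide_r r a) as [a' Ha'].
  fold g in Hq', Ha'.
  assert (Hqq : q = q') by (unfold q; rewrite Hq'; apply Nat.div_mul; auto).
  subst q'.
  assert (Hcop : Nat.gcd q a' = 1%nat).
  { replace a' with (a / g)%nat by (rewrite Ha'; apply Nat.div_mul; auto).
    apply Nat.gcd_div_gcd; auto. }
  assert (Hq0 : (0 < q)%nat) by (destruct q; lia).
  unfold congrb in Hc. apply Z.eqb_eq, Z.mod_divide in Hc; [|lia].
  assert (Hqa : (Z.of_nat q | Z.of_nat a' * (Z.of_nat n - Z.of_nat n'))%Z).
  { apply (Z.mul_divide_cancel_l _ _ (Z.of_nat g)); [lia|].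
    replace (Z.of_nat g * Z.of_nat q)%Z with (Z.of_nat r) by lia.
    replace (Z.of_nat g * (Z.of_nat a' * (Z.of_nat n - Z.of_nat n')))%Z
      with (Z.of_nat (a * n) - Z.of_nat (a * n'))%Z by (rewrite Ha'; lia).
    exact Hc. }
  assert (Hd : (Z.of_nat q | Z.of_nat n - Z.of_nat n')%Z).
  { apply Z.gauss with (Z.of_nat a'); auto.
    destruct (Nat.gcd_bezout_pos q a' Hq0) as [u [v Huv]]. rewrite Hcop in Huv.
    apply Z.bezout_1_gcd. exists (Z.of_nat u), (- Z.of_nat v)%Z. lia. }
  destruct Hd as [k Hk].
  apply Nat2Z.inj. rewrite !Nat2Z.inj_mod.
  replace (Z.of_nat n) with (Z.of_nat n' + k * Z.of_nat q)%Z by lia.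
  apply Z.mod_add. lia.
Qed.

Lemma length_filter_le_impl l (P Q : nat -> bool) :
  (forall x, P x = true -> Q x = true) ->
  (length (filter P l) <= length (filter Q l))%nat.
Proof.
  intros H; induction l as [|a l IH]; simpl; [lia|].
  destruct (P a) eqn:E; [rewrite (H a E); simpl; lia|].
  destruct (Q a); simpl; lia.
Qed.

(* [a n = a n' (mod r)] forces [n = n' (mod r / gcd(r, a))], so each frequency
   [a n / r] is shared by at most [N gcd(r, a) / r + 1] indices. *)
Lemma large_sieve_bound (a r N : nat) (c : nat -> C) (G : R) : (0 < r)%nat ->
  INR (Nat.gcd r a) <= G ->
  rsum (seq 0 r) (fun y => Cmod (expsum a r N c y) ^ 2)
  <= (INR N * G + INR r) * rsum (seq 1 N) (fun n => Cmod (c n) ^ 2).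
Proof.
  intros Hr HG. eapply Rle_trans; [apply rsum_Cmod_expsum_sq_le; auto|].
  set (g := Nat.gcd r a) in *. set (q := (r / g)%nat).
  assert (Hg0 : g <> 0%nat) by (unfold g; intro H; apply Nat.gcd_eq_0 in H; lia).
  assert (Hgq : (r = g * q)%nat).
  { unfold q. destruct (Nat.gcd_divide_l r a) as [k Hk]. fold g in Hk.
    rewrite Hk at 2. rewrite Nat.div_mul by auto. lia. }
  assert (Hq0 : (0 < q)%nat) by (destruct q; lia).
  assert (Hclass : INR r * (INR N / INR q + 1) <= INR N * G + INR r).
  { assert (0 < INR q) by (apply lt_0_INR; lia).
    replace (INR r * (INR N / INR q + 1)) with (INR N * INR g + INR r)
      by (rewrite Hgq, mult_INR; field; lra).
    pose proof (pos_INR N). nra. }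
  eapply Rle_trans; [|apply Rmult_le_compat_r; [|exact Hclass]].
  2: apply rsum_nonneg; intros; apply pow2_ge_0.
  rewrite Rmult_assoc. apply Rmult_le_compat_l; [apply pos_INR|].
  apply rsum_pairs_le; [intros; apply Cmod_ge_0| |].
  - intros n _. eapply Rle_trans; [|apply (count_congruent_le q N n Hq0)].
    apply le_INR, length_filter_le_impl. intros x Hx.
    apply Nat.eqb_eq. symmetry. exact (congrb_mul_cancel a r n x Hr Hx).
  - intros n' _. eapply Rle_trans; [|apply (count_congruent_le q N n' Hq0)].
    apply le_INR, length_filter_le_impl. intros x Hx.
    apply Nat.eqb_eq. exact (congrb_mul_cancel a r x n' Hr Hx).
Qed.

Definition units (r : nat) : list nat :=
  filter (fun x => Nat.eqb (Nat.gcd x r) 1) (seq 0 r).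

Lemma modinv_lt x r : (0 < r)%nat -> (modinv x r < r)%nat.
Proof.
  intros Hr. unfold modinv.
  destruct (filter _ (seq 0 r)) as [|y l] eqn:E; simpl; auto.
  assert (Hy : In y (filter (fun y => Nat.eqb ((x * y) mod r) (1 mod r)) (seq 0 r)))
    by (rewrite E; left; auto).
  apply filter_In in Hy. destruct Hy as [Hy _]. apply in_seq in Hy. lia.
Qed.

Lemma modinv_spec x r : (1 < r)%nat -> Nat.gcd x r = 1%nat ->
  ((x * modinv x r) mod r = 1 mod r)%nat.
Proof.
  intros Hr Hg.
  assert (Hx : (0 < x)%nat) by (destruct x; [rewrite Nat.gcd_0_l in Hg|]; lia).
  destruct (Nat.gcd_bezout_pos x r Hx) as [u [v Huv]]. rewrite Hg in Huv.
  assert (Hin : In (u mod r)%nat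
    (filter (fun y => Nat.eqb ((x * y) mod r) (1 mod r)) (seq 0 r))).
  { apply filter_In. split.
    - apply in_seq. pose proof (Nat.mod_upper_bound u r). lia.
    - apply Nat.eqb_eq. rewrite Nat.Div0.mul_mod_idemp_r, Nat.mul_comm, Huv.
      apply Nat.Div0.mod_add. }
  unfold modinv. destruct (filter _ (seq 0 r)) as [|y l] eqn:E; [inversion Hin|].
  assert (Hy : In y (filter (fun y => Nat.eqb ((x * y) mod r) (1 mod r)) (seq 0 r)))
    by (rewrite E; left; auto).
  apply filter_In in Hy. destruct Hy as [_ Hy]. apply Nat.eqb_eq; auto.
Qed.

Lemma modinv_inj x1 x2 r : (1 < r)%nat -> Nat.gcd x1 r = 1%nat -> Nat.gcd x2 r = 1%nat ->
  (x1 < r)%nat -> (x2 < r)%nat -> modinv x1 r = modinv x2 r -> x1 = x2.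
Proof.
  intros Hr H1 H2 L1 L2 E.
  pose proof (modinv_spec x1 r Hr H1) as S1. pose proof (modinv_spec x2 r Hr H2) as S2.
  rewrite E in S1. set (y := modinv x2 r) in *.
  rewrite <- (Nat.mod_small x1 r L1), <- (Nat.mod_small x2 r L2).
  rewrite <- (Nat.mul_1_r x1), <- (Nat.mul_1_r x2).
  rewrite <- (Nat.Div0.mul_mod_idemp_r x1), <- (Nat.Div0.mul_mod_idemp_r x2).
  rewrite <- S2 at 1. rewrite <- S1.
  rewrite !Nat.Div0.mul_mod_idemp_r. f_equal. ring.
Qed.

(* [x -> xbar] is injective on the units, so it only permutes part of [Z/rZ]. *)
Lemma rsum_units_modinv_le r g : (1 < r)%nat -> (forall x, 0 <= g x) ->
  rsum (units r) (fun x => g (modinv x r)) <= rsum (seq 0 r) g.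
Proof.
  intros Hr Hg. rewrite <- rsum_map. apply rsum_incl_le; auto.
  - apply NoDup_map_NoDup_ForallPairs; [|apply NoDup_filter, seq_NoDup].
    intros x y Hx Hy Hxy. unfold units in Hx, Hy. apply filter_In in Hx, Hy.
    destruct Hx as [Hx1 Hx2]; destruct Hy as [Hy1 Hy2]. apply in_seq in Hx1, Hy1.
    apply Nat.eqb_eq in Hx2, Hy2. apply (modinv_inj x y r); auto; lia.
  - intros z Hz. apply in_map_iff in Hz. destruct Hz as [x [<- _]].
    apply in_seq. pose proof (modinv_lt x r). lia.
Qed.

Lemma rsum_mul_le_sqrt l (u v : nat -> R) X Y : 0 < X -> 0 < Y ->
  rsum l (fun x => u x ^ 2) <= X -> rsum l (fun x => v x ^ 2) <= Y ->
  rsum l (fun x => u x * v x) <= sqrt X * sqrt Y.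
Proof.
  intros HX HY Hu Hv.
  set (a := sqrt X). set (b := sqrt Y). set (t := b / a).
  assert (Ha : 0 < a) by (apply sqrt_lt_R0; auto).
  assert (Hb : 0 < b) by (apply sqrt_lt_R0; auto).
  assert (Ht : 0 < t) by (apply Rdiv_lt_0_compat; auto).
  assert (EX : X = a * a) by (unfold a; rewrite sqrt_sqrt; lra).
  assert (EY : Y = b * b) by (unfold b; rewrite sqrt_sqrt; lra).
  (* AM-GM [u v <= t u^2/2 + v^2/(2t)] with the optimal [t = sqrt (Y/X)] *)
  apply Rle_trans with (rsum l (fun x => t / 2 * u x ^ 2 + / (2 * t) * v x ^ 2)).
  { apply rsum_le. intros x _. apply Rmult_le_reg_l with (2 * t); [lra|].
    replace (2 * t * (t / 2 * u x ^ 2 + / (2 * t) * v x ^ 2))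
      with (t * t * u x ^ 2 + v x ^ 2) by (field; lra).
    pose proof (pow2_ge_0 (t * u x - v x)). nra. }
  rewrite rsum_plus, !rsum_scal.
  assert (0 < / (2 * t)) by (apply Rinv_0_lt_compat; lra).
  apply Rle_trans with (t / 2 * X + / (2 * t) * Y).
  - apply Rplus_le_compat; apply Rmult_le_compat_l; auto; lra.
  - rewrite EX, EY. unfold t. right. field. lra.
Qed.

Lemma kloosterman_units (a n r : nat) : kloosterman a n r =
  csum (units r) (fun x => (e (INR (a * x) / INR r) * e (INR (1 * n * modinv x r) / INR r))%C).
Proof.
  unfold kloosterman, units. apply csum_ext. intros x _. rewrite <- e_add. f_equal.
  rewrite plus_INR, Nat.mul_1_l. unfold Rdiv. ring.
Qed.

Lemma bilinB_units l d M N r alpha beta :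
  bilinB l d M N r alpha beta =
  (csum (units r) (fun x => expsum (l * d) r M alpha x * expsum 1 r N beta (modinv x r))
   / RtoC (sqrt (INR r)))%C.
Proof.
  unfold bilinB, Cdiv, expsum.
  set (T := fun m n x => (alpha m * e (INR (l * d * m * x) / INR r) *
                          (beta n * e (INR (1 * n * modinv x r) / INR r)))%C).
  transitivity (csum (seq 1 M) (fun m => csum (seq 1 N) (fun n =>
      csum (units r) (fun x => T m n x))) * / RtoC (sqrt (INR r)))%C.
  - rewrite <- csum_mult_r. apply csum_ext. intros m _.
    rewrite <- csum_mult_r. apply csum_ext. intros n _.
    rewrite kloosterman_units, Cmult_assoc. f_equal.
    rewrite <- csum_mult_l. apply csum_ext. intros x _.
    unfold T. ring.
  - f_equal. symmetry.
    rewrite (csum_ext (units r) _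
      (fun x => csum (seq 1 M) (fun m => csum (seq 1 N) (fun n => T m n x)))).
    + rewrite csum_swap. apply csum_ext. intros m _. apply csum_swap.
    + intros x _. rewrite <- csum_mult_r. apply csum_ext. intros m _.
      rewrite <- csum_mult_l. reflexivity.
Qed.

Lemma rsum_Cmod_sq_le (c : nat -> C) K N :
  (forall n, (1 <= n <= N)%nat -> Cmod (c n) <= K) ->
  rsum (seq 1 N) (fun n => Cmod (c n) ^ 2) <= INR N * K ^ 2.
Proof.
  intros Hc. apply Rle_trans with (rsum (seq 1 N) (fun _ => K ^ 2)).
  - apply rsum_le. intros n Hn. apply in_seq in Hn.
    apply pow_incr. split; [apply Cmod_ge_0|apply Hc; lia].
  - rewrite rsum_const, length_seq. lra.
Qed.

Lemma Cmod_bilinB_le (l d M N r : nat) alpha beta G a b :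
  (1 <= M)%nat -> (1 <= N)%nat -> (1 < r)%nat -> INR (Nat.gcd r (l * d)) <= G ->
  0 < a -> 0 < b -> (forall m, (1 <= m <= M)%nat -> Cmod (alpha m) <= a) ->
  (forall n, (1 <= n <= N)%nat -> Cmod (beta n) <= b) ->
  Cmod (bilinB l d M N r alpha beta) <=
  sqrt ((INR M * G + INR r) * (INR M * a ^ 2)) *
  sqrt ((INR N + INR r) * (INR N * b ^ 2)) / sqrt (INR r).
Proof.
  intros HM HN Hr HG Ha Hb Halpha Hbeta.
  assert (Hrp : 0 < INR r) by (apply lt_0_INR; lia).
  assert (Hsr : 0 < sqrt (INR r)) by (apply sqrt_lt_R0; auto).
  assert (HG0 : 0 <= G) by (eapply Rle_trans; [apply pos_INR|exact HG]).
  rewrite bilinB_units, Cmod_div.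
  2:{ intro H. apply (f_equal fst) in H. simpl in H. lra. }
  rewrite Cmod_R, Rabs_pos_eq by apply sqrt_pos.
  apply Rmult_le_compat_r; [left; apply Rinv_0_lt_compat; auto|].
  eapply Rle_trans; [apply Cmod_csum_le|].
  rewrite (rsum_ext _ _ (fun x => Cmod (expsum (l * d) r M alpha x) *
                                  Cmod (expsum 1 r N beta (modinv x r))))
    by (intros; apply Cmod_mult).
  assert (1 <= INR M /\ 1 <= INR N) as [] by (split; apply (le_INR 1); auto).
  assert (0 < a ^ 2 /\ 0 < b ^ 2) as [] by (split; apply pow_lt; auto).
  apply rsum_mul_le_sqrt.
  - apply Rmult_lt_0_compat; [|apply Rmult_lt_0_compat]; nra.
  - apply Rmult_lt_0_compat; [|apply Rmult_lt_0_compat]; lra.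
  - eapply Rle_trans; [apply rsum_filter_le; intros; apply pow2_ge_0|].
    eapply Rle_trans; [apply large_sieve_bound; [lia|exact HG]|].
    apply Rmult_le_compat_l; [nra|]. apply rsum_Cmod_sq_le; auto.
  - eapply Rle_trans.
    { apply (rsum_units_modinv_le r (fun y => Cmod (expsum 1 r N beta y) ^ 2)); auto.
      intros; apply pow2_ge_0. }
    eapply Rle_trans; [apply (large_sieve_bound 1 r N beta 1); [lia|]|].
    + rewrite (Nat.divide_1_r _ (Nat.gcd_divide_r r 1)). simpl. lra.
    + rewrite Rmult_1_r. apply Rmult_le_compat_l; [lra|]. apply rsum_Cmod_sq_le; auto.
Qed.

Lemma Cmod_le_growth_max (c : nat -> C) (C0 eps : R) (N : nat) : 0 < eps ->
  (forall n, (1 <= n <= N)%nat -> Cmod (c n) <= C0 * Rpower (INR n) eps) ->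
  forall n, (1 <= n <= N)%nat -> Cmod (c n) <= (Rabs C0 + 1) * Rpower (INR N) eps.
Proof.
  intros Heps Hc n Hn.
  assert (Hpow : 0 < Rpower (INR n) eps <= Rpower (INR N) eps).
  { split; [apply exp_pos|]. apply Rle_Rpower_l; [lra|].
    split; [apply lt_0_INR|apply le_INR]; lia. }
  pose proof (Hc n Hn). pose proof (Rle_abs C0). pose proof (Rabs_pos C0). nra.
Qed.

Lemma gcd_mul_coprime_le l d r : Nat.gcd l r = 1%nat -> (0 < d)%nat ->
  (Nat.gcd r (l * d) <= d)%nat.
Proof.
  intros Hlr Hd. apply Nat.divide_pos_le; auto.
  apply Nat.gauss with l; [apply Nat.gcd_divide_r|].
  apply Nat.divide_1_r. rewrite <- Hlr.
  apply Nat.gcd_greatest; [apply Nat.gcd_divide_r|].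
  apply Nat.divide_trans with (Nat.gcd r (l * d)); apply Nat.gcd_divide_l.
Qed.

Lemma gcd_prime_pow_mul_le p h l d : (0 < p)%nat -> Nat.gcd l (p ^ h) = 1%nat ->
  (d = 1%nat \/ d = p \/ d = (p ^ 2)%nat) -> (Nat.gcd (p ^ h) (l * d) <= p ^ 2)%nat.
Proof.
  intros Hp Hlr Hd.
  assert (Hd_le : (0 < d <= p ^ 2)%nat)
    by (rewrite Nat.pow_2_r in *; destruct Hd as [->|[->| ->]]; nia).
  pose proof (gcd_mul_coprime_le l d (p ^ h) Hlr ltac:(lia)). lia.
Qed.

Lemma prime_pow_gt_1 p h : prime (Z.of_nat p) -> (1 <= h)%nat -> (1 < p ^ h)%nat.
Proof.
  intros Hp Hh. apply prime_ge_2 in Hp.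
  pose proof (Nat.pow_le_mono_r p 1 h ltac:(lia) Hh). simpl in *. lia.
Qed.

Lemma Rpower_half_sq x : 0 < x -> Rpower x (1/2) ^ 2 = x.
Proof.
  intros Hx. rewrite <- Rpower_pow by apply exp_pos. rewrite Rpower_mult.
  replace (1/2 * INR 2) with 1 by (simpl; field). apply Rpower_1; auto.
Qed.

Lemma Rpower_quarter_sq x : 0 < x -> Rpower x (1/4) ^ 2 = sqrt x.
Proof.
  intros Hx. rewrite <- Rpower_pow by apply exp_pos. rewrite Rpower_mult.
  replace (1/4 * INR 2) with (/ 2) by (simpl; field). apply Rpower_sqrt; auto.
Qed.

(* Whichever of [s M^2] and [r] is larger, one of the two square roots is at least [1/M]. *)
Lemma sqrt_divisor_terms_lower (M r s : R) : 1 <= M -> 1 <= r -> 1 <= s ->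
  1 / r <= sqrt (s / r) + sqrt (r / (M ^ 2 * s)) /\
  1 / M <= sqrt (s / r) + sqrt (r / (M ^ 2 * s)).
Proof.
  intros HM Hr Hs.
  assert (0 <= sqrt (s / r)) by apply sqrt_pos.
  assert (0 <= sqrt (r / (M ^ 2 * s))) by apply sqrt_pos.
  assert (Hinv : forall x, 1 <= x -> 0 < 1 / x <= 1).
  { intros x Hx. split; [apply Rdiv_lt_0_compat; lra|].
    apply Rmult_le_reg_r with x; [lra|]. field_simplify; lra. }
  pose proof (Hinv M HM) as H1M. pose proof (Hinv r Hr) as H1r.
  split.
  - apply Rle_trans with (sqrt (s / r)); [|lra].
    rewrite <- (sqrt_square (1 / r)) by lra. apply sqrt_le_1_alt.
    apply Rle_trans with (1 / r); [nra|].
    unfold Rdiv. apply Rmult_le_compat_r; [left; apply Rinv_0_lt_compat|]; lra.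
  - destruct (Rle_dec r (s * M ^ 2)) as [Hle|Hgt].
    + apply Rle_trans with (sqrt (s / r)); [|lra].
      rewrite <- (sqrt_square (1 / M)) by lra. apply sqrt_le_1_alt.
      apply Rmult_le_reg_l with (r * M * M); [nra|]. field_simplify; nra.
    + apply Rle_trans with (sqrt (r / (M ^ 2 * s))); [|lra].
      apply Rle_trans with 1; [lra|]. rewrite <- sqrt_1. apply sqrt_le_1_alt.
      apply Rmult_le_reg_l with (M ^ 2 * s); [nra|]. field_simplify; nra.
Qed.

Lemma divisor_term_bound (M N r s : R) : 1 <= M -> 1 <= N -> 1 <= r -> 1 <= s ->
  let f := Rpower (r / N) (1/2) + Rpower (s / r) (1/4)
           + Rpower (r / (M ^ 2 * s)) (1/4) in
  0 <= f /\ (M + r) * (N + r) <= 4 * r * M * N * f ^ 2.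
Proof.
  intros HM HN Hr Hs f.
  set (A := Rpower (r / N) (1/2)). set (B := Rpower (s / r) (1/4)).
  set (C := Rpower (r / (M ^ 2 * s)) (1/4)).
  assert (0 < A /\ 0 < B /\ 0 < C) as (HA & HB & HC) by (repeat split; apply exp_pos).
  assert (EA : A ^ 2 = r / N) by (apply Rpower_half_sq, Rdiv_lt_0_compat; lra).
  assert (EB : B ^ 2 = sqrt (s / r)) by (apply Rpower_quarter_sq, Rdiv_lt_0_compat; lra).
  assert (EC : C ^ 2 = sqrt (r / (M ^ 2 * s)))
    by (apply Rpower_quarter_sq, Rdiv_lt_0_compat; nra).
  destruct (sqrt_divisor_terms_lower M r s HM Hr Hs) as [Hr1 HM1].
  rewrite <- EB, <- EC in Hr1, HM1.
  assert (Hf : A ^ 2 + B ^ 2 + C ^ 2 <= f ^ 2) by (unfold f; fold A B C; nra).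
  split; [unfold f; fold A B C; lra|].
  assert (HMN : 0 < r * M * N) by (repeat apply Rmult_lt_0_compat; lra).
  assert (E1 : r * M * N * A ^ 2 = r * r * M) by (rewrite EA; field; lra).
  assert (E2 : r * M * N * (1 / M) = r * N) by (field; lra).
  assert (E3 : r * M * N * (1 / r) = M * N) by (field; lra).
  assert (r * M * N * (1 / M) <= r * M * N * (B ^ 2 + C ^ 2))
    by (apply Rmult_le_compat_l; lra).
  assert (r * M * N * (1 / r) <= r * M * N * (B ^ 2 + C ^ 2))
    by (apply Rmult_le_compat_l; lra).
  assert (0 <= (r - 1) * (r * M)) by (apply Rmult_le_pos; nra).
  assert (0 <= (M - 1) * (r * r)) by (apply Rmult_le_pos; nra).
  nra.
Qed.

Lemma min_div_ind r f (P : R -> Prop) : P (f 1%nat) ->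
  (forall s, In s (divisors r) -> P (f s)) -> P (min_div r f).
Proof.
  intros H1 Hdiv. unfold min_div. induction (divisors r) as [|a l IH]; simpl; auto.
  destruct (Rle_dec (f a) (fold_right Rmin (f 1%nat) (map f l))).
  - rewrite Rmin_left by auto. apply Hdiv. left; auto.
  - rewrite Rmin_right by lra. apply IH. intros; apply Hdiv; right; auto.
Qed.

Lemma min_div_bound (M N r : nat) : (1 <= M)%nat -> (1 <= N)%nat -> (1 <= r)%nat ->
  let F := min_div r (fun s =>
        Rpower (INR r / INR N) (1/2)
        + Rpower (INR s / INR r) (1/4)
        + Rpower (INR r / (INR M ^ 2 * INR s)) (1/4)) in
  0 <= F /\ (INR M + INR r) * (INR N + INR r) <= 4 * INR r * INR M * INR N * F ^ 2.
Proof.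
  intros HM HN Hr F.
  assert (H1 : forall n, (1 <= n)%nat -> 1 <= INR n) by (intros; apply (le_INR 1); auto).
  apply min_div_ind.
  - apply divisor_term_bound; auto.
  - intros s Hs. apply filter_In in Hs. destruct Hs as [Hs _]. apply in_seq in Hs.
    apply divisor_term_bound; apply H1; lia.
Qed.

Lemma Rpower_mult_le_prod (x y z eps : R) : 1 <= x -> 1 <= y -> 1 <= z -> 0 <= eps ->
  Rpower x eps * Rpower y eps <= Rpower (x * y * z) eps.
Proof.
  intros Hx Hy Hz Heps. rewrite Rpower_mult_distr by lra.
  assert (Hxy : 0 < x * y) by (apply Rmult_lt_0_compat; lra).
  apply Rle_Rpower_l; [lra|]. split; [exact Hxy|].
  rewrite <- (Rmult_1_r (x * y)) at 1. apply Rmult_le_compat_l; lra.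
Qed.

Lemma bilinear_bound_arith (M N r p ca cb u v w F : R) :
  1 <= M -> 1 <= N -> 1 <= r -> 1 <= p -> 0 < ca -> 0 < cb -> 0 < u -> 0 < v ->
  u * v <= w -> 0 <= F -> (M + r) * (N + r) <= 4 * r * M * N * F ^ 2 ->
  sqrt ((M * p ^ 2 + r) * (M * (ca * u) ^ 2)) * sqrt ((N + r) * (N * (cb * v) ^ 2))
  / sqrt r <= 2 * p * ca * cb * w * M * N * F.
Proof.
  intros HM HN Hr Hp Hca Hcb Hu Hv Hw HF H.
  set (a := ca * u). set (b := cb * v).
  assert (Ha : 0 < a) by (apply Rmult_lt_0_compat; auto).
  assert (Hb : 0 < b) by (apply Rmult_lt_0_compat; auto).
  assert (0 <= (M * p ^ 2 + r) * (M * a ^ 2)) by (apply Rmult_le_pos; nra).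
  assert (0 <= (N + r) * (N * b ^ 2)) by (apply Rmult_le_pos; nra).
  assert (HK : 0 <= 2 * p * ca * cb * M * N * F) by (repeat apply Rmult_le_pos; lra).
  apply Rle_trans with (2 * p * a * b * M * N * F).
  2:{ unfold a, b.
      replace (2 * p * (ca * u) * (cb * v) * M * N * F)
        with (2 * p * ca * cb * M * N * F * (u * v)) by ring.
      replace (2 * p * ca * cb * w * M * N * F)
        with (2 * p * ca * cb * M * N * F * w) by ring.
      apply Rmult_le_compat_l; auto. }
  rewrite <- sqrt_mult, <- sqrt_div_alt by lra.
  rewrite <- (sqrt_square (2 * p * a * b * M * N * F))
    by (repeat apply Rmult_le_pos; lra).
  apply sqrt_le_1_alt.
  assert (Hp2 : (M * p ^ 2 + r) * (N + r) <= p ^ 2 * ((M + r) * (N + r))).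
  { assert (0 <= (p ^ 2 - 1) * r * (N + r)) by (repeat apply Rmult_le_pos; nra). nra. }
  assert (Hw0 : 0 < M * N * (a * b) ^ 2 / r)
    by (apply Rdiv_lt_0_compat; [apply Rmult_lt_0_compat; [nra|apply pow_lt; nra]|lra]).
  replace ((M * p ^ 2 + r) * (M * a ^ 2) * ((N + r) * (N * b ^ 2)) / r)
    with ((M * p ^ 2 + r) * (N + r) * (M * N * (a * b) ^ 2 / r)) by (field; lra).
  replace (2 * p * a * b * M * N * F * (2 * p * a * b * M * N * F))
    with (p ^ 2 * (4 * r * M * N * F ^ 2) * (M * N * (a * b) ^ 2 / r)) by (field; lra).
  apply Rmult_le_compat_r; [lra|]. nra.
Qed.


Theorem mainTheorem12 :
  forall (p : nat), prime (Z.of_nat p) ->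
  forall (Calpha Cbeta : R -> R) (eps : R), 0 < eps ->
  exists K : R, forall (h' l d M N : nat) (alpha beta : nat -> C),
    (1 <= h')%nat ->
    (1 <= l)%nat -> Nat.gcd l (p ^ h') = 1%nat ->
    (d = 1%nat \/ d = p \/ d = (p ^ 2)%nat) ->
    (1 <= M)%nat -> (1 <= N)%nat ->
    (forall eps', 0 < eps' -> forall m, (1 <= m <= M)%nat ->
        Cmod (alpha m) <= Calpha eps' * Rpower (INR m) eps') ->
    (forall eps', 0 < eps' -> forall n, (1 <= n <= N)%nat ->
        Cmod (beta n) <= Cbeta eps' * Rpower (INR n) eps') ->
    let r := (p ^ h')%nat in
    Cmod (bilinB l d M N r alpha beta) <=
      K * Rpower (INR M * INR N * INR r) eps * INR M * INR N *
      min_div r (fun s =>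
        Rpower (INR r / INR N) (1/2)
        + Rpower (INR s / INR r) (1/4)
        + Rpower (INR r / (INR M ^ 2 * INR s)) (1/4)).
Proof.
  intros p Hp Calpha Cbeta eps Heps.
  set (Ca := Rabs (Calpha eps) + 1). set (Cb := Rabs (Cbeta eps) + 1).
  exists (2 * INR p * Ca * Cb).
  intros h' l d M N alpha beta Hh _ Hlr Hd HM HN Halpha Hbeta r.
  assert (Hr : (1 < r)%nat) by (apply prime_pow_gt_1; auto).
  assert (Hp2 : (2 <= p)%nat) by (apply prime_ge_2 in Hp; lia).
  assert (Hgcd : INR (Nat.gcd r (l * d)) <= INR p ^ 2).
  { rewrite <- pow_INR. apply le_INR, gcd_prime_pow_mul_le; auto. lia. }
  assert (HINR : forall n, (1 <= n)%nat -> 1 <= INR n) by (intros; apply (le_INR 1); auto).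
  assert (HCa : 0 < Ca) by (pose proof (Rabs_pos (Calpha eps)); unfold Ca; lra).
  assert (HCb : 0 < Cb) by (pose proof (Rabs_pos (Cbeta eps)); unfold Cb; lra).
  assert (Hab : 0 < Ca * Rpower (INR M) eps /\ 0 < Cb * Rpower (INR N) eps)
    by (split; apply Rmult_lt_0_compat; auto; apply exp_pos).
  destruct (min_div_bound M N r HM HN ltac:(lia)) as [HF0 HF].
  eapply Rle_trans.
  { apply (Cmod_bilinB_le l d M N r alpha beta (INR p ^ 2)
      (Ca * Rpower (INR M) eps) (Cb * Rpower (INR N) eps)); try easy;
      apply Cmod_le_growth_max; auto. }
  apply bilinear_bound_arith; try easy; try (apply HINR; lia); try apply exp_pos.
  apply Rpower_mult_le_prod; try (apply HINR; lia). lra.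
Qed.
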